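(* There exists an absolute constant $c>0$ such that the following holds. Let $k'\ge0$ be an integer, let $y_1,y_2\in\mathbb R$ with $|y_1|,|y_2|\le c\,3^{-k'}$, and let $w_1,w_2\in\mathbb C$ satisfy $|w_j|=e^{y_j}$ ($j=1,2$) and $1+w_1+w_2=0$. Then for every integer $k$ with $1\le k\le k'+1$, $$\operatorname{Re}\big(1+w_1^{3^k}+w_2^{3^k}\big)\ge 2,\quad\text{in particular}\quad |1+w_1^{3^k}+w_2^{3^k}|\ge2.$$ *)

From Stdlib Require Import Reals.
Open Scope R_scope.

Record Cplx : Type := mkC { Re : R ; Im : R }.

Definition Czero : Cplx := mkC 0 0.
Definition Cone : Cplx := mkC 1 0.
Definition Cadd (z w : Cplx) : Cplx := mkC (Re z + Re w) (Im z + Im w).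
Definition Cmul (z w : Cplx) : Cplx :=
  mkC (Re z * Re w - Im z * Im w) (Re z * Im w + Im z * Re w).
Fixpoint Cpow (z : Cplx) (n : nat) : Cplx :=
  match n with
  | O => Cone
  | S m => Cmul z (Cpow z m)
  end.
Definition Cmod (z : Cplx) : R := sqrt (Re z ^ 2 + Im z ^ 2).

(* Measure how far a complex number z is from 1 by
   dist1 z = |Re z - 1| + |Im z|.  This quantity is submultiplicative in the
   sense 1 + dist1 (z u) <= (1 + dist1 z) (1 + dist1 u), hence
   dist1 (z^n) <= (1 + dist1 z)^n - 1, and this stays <= 1/2 as long as
   n * dist1 z <= 1/3 (a reverse Bernoulli inequality).
   If 1 + w1 + w2 = 0 and |w1|, |w2| = e^{y_j} with |y_j| <= d, then
   |w_j|^2 and |1 + w_j|^2 = |w_{3-j}|^2 are both within 4d of 1, which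
   forces w_j to be close to a primitive cube root of unity: dist1 (w_j^3)
   <= 64 d.  Writing w_j^{3^k} = (w_j^3)^{3^(k-1)} with 3^(k-1) <= 3^k' and
   d = c / 3^k', c = 1/400, we get dist1 (w_j^{3^k}) <= 1/2, so
   Re (1 + w1^{3^k} + w2^{3^k}) >= 1 + 1/2 + 1/2 = 2, and the modulus is at
   least the real part. *)
From Stdlib Require Import Reals Lra Lia Psatz.
Open Scope R_scope.

Definition norm2 (z : Cplx) : R := Re z ^ 2 + Im z ^ 2.

Definition dist1 (z : Cplx) : R := Rabs (Re z - 1) + Rabs (Im z).

Lemma Cmul_assoc x y z : Cmul x (Cmul y z) = Cmul (Cmul x y) z.
Proof. destruct x, y, z; unfold Cmul; simpl; f_equal; ring. Qed.

Lemma Cmul_1_l x : Cmul Cone x = x.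
Proof. destruct x; unfold Cmul, Cone; simpl; f_equal; ring. Qed.

Lemma Cpow_add w n m : Cpow w (n + m) = Cmul (Cpow w n) (Cpow w m).
Proof.
  induction n as [|n IH]; simpl.
  - now rewrite Cmul_1_l.
  - now rewrite IH, Cmul_assoc.
Qed.

Lemma Cpow_mul w n m : Cpow w (n * m) = Cpow (Cpow w n) m.
Proof.
  induction m as [|m IH]; simpl.
  - now rewrite Nat.mul_0_r.
  - now rewrite Nat.mul_succ_r, Nat.add_comm, Cpow_add, IH.
Qed.

Lemma dist1_nonneg z : 0 <= dist1 z.
Proof. unfold dist1; pose proof (Rabs_pos (Re z - 1)); pose proof (Rabs_pos (Im z)); lra. Qed.

Lemma Rabs_sum4 p q r s : Rabs (p + q + r - s) <= Rabs p + Rabs q + Rabs r + Rabs s.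
Proof.
  unfold Rminus; rewrite <- (Rabs_Ropp s).
  pose proof (Rabs_triang (p + q + r) (- s)).
  pose proof (Rabs_triang (p + q) r).
  pose proof (Rabs_triang p q).
  lra.
Qed.

Lemma Rabs_le_bounds x e : Rabs x <= e -> - e <= x <= e.
Proof. unfold Rabs; destruct (Rcase_abs x); lra. Qed.

Lemma dist1_mul z u : dist1 (Cmul z u) <= (1 + dist1 z) * (1 + dist1 u) - 1.
Proof.
  destruct z as [zx zy], u as [ux uy]; unfold dist1, Cmul; simpl.
  set (dx := zx - 1). set (ex := ux - 1).
  replace (zx * ux - zy * uy - 1) with (dx + ex + dx * ex - zy * uy)
    by (unfold dx, ex; ring).
  replace (zx * uy + zy * ux) with (uy + zy + dx * uy - (- (zy * ex)))
    by (unfold dx, ex; ring).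
  pose proof (Rabs_sum4 dx ex (dx * ex) (zy * uy)).
  pose proof (Rabs_sum4 uy zy (dx * uy) (- (zy * ex))).
  rewrite !Rabs_mult, Rabs_Ropp, Rabs_mult in *.
  pose proof (Rabs_pos dx); pose proof (Rabs_pos ex);
  pose proof (Rabs_pos zy); pose proof (Rabs_pos uy).
  nra.
Qed.

Lemma dist1_pow z n : dist1 (Cpow z n) <= (1 + dist1 z) ^ n - 1.
Proof.
  induction n as [|n IH]; simpl.
  - unfold dist1, Cone; simpl. rewrite Rminus_diag, Rabs_R0. lra.
  - pose proof (dist1_mul z (Cpow z n)). pose proof (dist1_nonneg z). nra.
Qed.

Lemma pow_growth_bound x n :
  0 <= x -> INR n * x < 1 -> (1 + x) ^ n * (1 - INR n * x) <= 1.
Proof.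
  intros Hx. induction n as [|n IH]; intros Hn.
  - simpl. lra.
  - rewrite S_INR in *. simpl.
    pose proof (pos_INR n).
    assert (Hn' : INR n * x < 1) by nra.
    specialize (IH Hn').
    assert (0 <= (1 + x) ^ n) by (apply pow_le; lra).
    assert ((1 + x) * (1 - (INR n + 1) * x) <= 1 - INR n * x) by nra.
    nra.
Qed.

Lemma dist1_pow_small u x n :
  dist1 u <= x -> INR n * x <= 1 / 3 -> dist1 (Cpow u n) <= 1 / 2.
Proof.
  intros Hu Hn.
  pose proof (dist1_nonneg u).
  pose proof (pow_growth_bound x n ltac:(lra) ltac:(lra)) as Hb.
  assert ((1 + dist1 u) ^ n <= (1 + x) ^ n) by (apply pow_incr; lra).
  assert (0 <= (1 + x) ^ n) by (apply pow_le; lra).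
  pose proof (dist1_pow u n).
  nra.
Qed.

Lemma exp_sq_near_one y : Rabs y <= 1 / 8 -> Rabs (exp y ^ 2 - 1) <= 4 * Rabs y.
Proof.
  intros H.
  replace (exp y ^ 2) with (exp (2 * y))
    by (replace (2 * y) with (y + y) by ring; rewrite exp_plus; ring).
  pose proof (exp_ineq1_le (2 * y)). pose proof (exp_ineq1_le (- (2 * y))).
  assert (exp (2 * y) * exp (- (2 * y)) = 1)
    by (rewrite <- exp_plus, Rplus_opp_r; apply exp_0).
  pose proof (exp_pos (2 * y)).
  apply Rabs_le. revert H. unfold Rabs; destruct (Rcase_abs y); intros; split; nra.
Qed.

Lemma norm2_of_Cmod w y : Cmod w = exp y -> norm2 w = exp y ^ 2.
Proof.
  unfold Cmod, norm2; intros Hw. rewrite <- Hw, pow2_sqrt; [reflexivity|].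
  pose proof (pow2_ge_0 (Re w)); pose proof (pow2_ge_0 (Im w)); lra.
Qed.

Lemma norm2_one_add w1 w2 :
  Cadd (Cadd Cone w1) w2 = Czero -> norm2 (Cadd Cone w1) = norm2 w2.
Proof.
  destruct w1 as [a b], w2 as [a' b'].
  unfold Cadd, Cone, Czero, norm2; simpl; intros Hs; injection Hs as Hr Hi.
  replace a' with (- (1 + a)) by lra. replace b' with (- (0 + b)) by lra. ring.
Qed.

Lemma Cpow3_coords a b :
  Cpow (mkC a b) 3 = mkC (a ^ 3 - 3 * a * b ^ 2) (b * (3 * a ^ 2 - b ^ 2)).
Proof. unfold Cpow, Cmul, Cone; simpl; f_equal; ring. Qed.

(* If |w| and |1 + w| are both almost 1, then w is almost a primitive cube
   root of unity, so w^3 is almost 1.  Writing t, t' for the two defects,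
   Re w = -1/2 + (t' - t)/2 and (Im w)^2 = 1 + t - (Re w)^2. *)
Lemma cube_near_one w eps :
  Rabs (norm2 w - 1) <= eps -> Rabs (norm2 (Cadd Cone w) - 1) <= eps ->
  eps <= 1 / 100 -> dist1 (Cpow w 3) <= 16 * eps.
Proof.
  destruct w as [a b]; rewrite Cpow3_coords.
  unfold norm2, dist1, Cadd, Cone; cbn [Re Im]; intros Hs Hs' He.
  set (t := a ^ 2 + b ^ 2 - 1) in Hs. set (t' := (1 + a) ^ 2 + (0 + b) ^ 2 - 1) in Hs'.
  apply Rabs_le_bounds in Hs. apply Rabs_le_bounds in Hs'.
  assert (Ha : a = (t' - t - 1) / 2) by (unfold t, t'; field).
  assert (Hb2 : b ^ 2 = 1 + t - a ^ 2) by (unfold t; ring).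
  assert (Hb : Rabs b <= 2) by (apply Rabs_le; nra).
  clearbody t t'.
  assert (Hre : Rabs (a ^ 3 - 3 * a * b ^ 2 - 1) <= 4 * eps)
    by (rewrite Hb2; apply Rabs_le; split; nra).
  assert (Him : Rabs (3 * a ^ 2 - b ^ 2) <= 6 * eps)
    by (rewrite Hb2; apply Rabs_le; split; nra).
  rewrite Rabs_mult.
  assert (Rabs b * Rabs (3 * a ^ 2 - b ^ 2) <= 2 * (6 * eps))
    by (apply Rmult_le_compat; auto using Rabs_pos).
  lra.
Qed.

Lemma pow3_mult_near_one w eps n :
  Rabs (norm2 w - 1) <= eps -> Rabs (norm2 (Cadd Cone w) - 1) <= eps ->
  eps <= 1 / 100 -> INR n * (16 * eps) <= 1 / 3 ->
  dist1 (Cpow w (3 * n)) <= 1 / 2.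
Proof.
  intros Hw Hw1 He Hn. rewrite Cpow_mul.
  apply (dist1_pow_small _ (16 * eps)); [now apply cube_near_one | exact Hn].
Qed.

Lemma sum_near_ones u1 u2 :
  dist1 u1 <= 1 / 2 -> dist1 u2 <= 1 / 2 ->
  2 <= Re (Cadd (Cadd Cone u1) u2) /\ 2 <= Cmod (Cadd (Cadd Cone u1) u2).
Proof.
  unfold dist1; intros H1 H2.
  pose proof (Rabs_pos (Im u1)); pose proof (Rabs_pos (Im u2)).
  assert (R1 : Rabs (Re u1 - 1) <= 1 / 2) by lra. apply Rabs_le_bounds in R1.
  assert (R2 : Rabs (Re u2 - 1) <= 1 / 2) by lra. apply Rabs_le_bounds in R2.
  unfold Cadd, Cone, Cmod; simpl.
  split; [lra|].
  rewrite <- (sqrt_pow2 2) by lra.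
  apply sqrt_le_1_alt.
  pose proof (pow2_ge_0 (0 + Im u1 + Im u2)). nra.
Qed.

Theorem lemma24 :
  exists c : R, 0 < c /\
  forall (k' : nat) (y1 y2 : R) (w1 w2 : Cplx),
    Rabs y1 <= c / 3 ^ k' ->
    Rabs y2 <= c / 3 ^ k' ->
    Cmod w1 = exp y1 ->
    Cmod w2 = exp y2 ->
    Cadd (Cadd Cone w1) w2 = Czero ->
    forall k : nat, (1 <= k <= k' + 1)%nat ->
      2 <= Re (Cadd (Cadd Cone (Cpow w1 (3 ^ k))) (Cpow w2 (3 ^ k))) /\
      2 <= Cmod (Cadd (Cadd Cone (Cpow w1 (3 ^ k))) (Cpow w2 (3 ^ k))).
Proof.
  exists (1 / 400). split; [lra|].
  intros k' y1 y2 w1 w2 Hy1 Hy2 Hm1 Hm2 Hs [|j] Hk; [lia|].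
  set (d := 1 / 400 / 3 ^ k') in *.
  assert (H3 : 1 <= 3 ^ k') by (apply pow_R1_Rle; lra).
  assert (Hd : 0 <= d <= 1 / 400)
    by (split; unfold d; apply Rmult_le_reg_r with (3 ^ k'); field_simplify; lra).
  assert (Hj : INR (3 ^ j) * d <= 1 / 400).
  { assert (INR (3 ^ j) <= 3 ^ k')
      by (rewrite pow_INR, INR_IZR_INZ; apply Rle_pow; [simpl; lra | lia]).
    replace (1 / 400) with (3 ^ k' * d) by (unfold d; field; lra).
    nra. }
  assert (N1 : Rabs (norm2 w1 - 1) <= 4 * d)
    by (rewrite (norm2_of_Cmod w1 y1 Hm1); eapply Rle_trans; [apply exp_sq_near_one|]; lra).
  assert (N2 : Rabs (norm2 w2 - 1) <= 4 * d)
    by (rewrite (norm2_of_Cmod w2 y2 Hm2); eapply Rle_trans; [apply exp_sq_near_one|]; lra).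
  assert (Hs' : Cadd (Cadd Cone w2) w1 = Czero)
    by (rewrite <- Hs; destruct w1, w2; unfold Cadd; simpl; f_equal; ring).
  assert (N1' : Rabs (norm2 (Cadd Cone w1) - 1) <= 4 * d)
    by (rewrite (norm2_one_add _ _ Hs); exact N2).
  assert (N2' : Rabs (norm2 (Cadd Cone w2) - 1) <= 4 * d)
    by (rewrite (norm2_one_add _ _ Hs'); exact N1).
  change (3 ^ S j)%nat with (3 * 3 ^ j)%nat.
  apply sum_near_ones; apply pow3_mult_near_one with (4 * d); auto; lra.
Qed.
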